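(* Let $n\ge 2$ and $\sigma,\tau\in S_n$ with $\sigma^{\sf CT}\neq\tau^{\sf CT}$. Let $\omega$ and $\pi$ be the cycles of the disjoint cycle decomposition of $\sigma^{-1}\tau$ containing $n-1$ and $\sigma(n-1)$, respectively (a cycle being $(0)$, the identity, if the symbol is fixed). Suppose $\sigma^{-1}\tau=\rho\,\omega\,\pi$ if $\omega\neq\pi$ and $\sigma^{-1}\tau=\rho\,\omega$ if $\omega=\pi$, where $\rho\in S_n$ is disjoint from $\omega$ and $\pi$. Then $(\sigma^{\sf CT})^{-1}\tau^{\sf CT}=\rho\,\chi$ for some $\chi\in S_{n-1}$ disjoint from $\rho$, and: (1) if ${\rm hd}(\sigma^{\sf CT},\tau^{\sf CT})={\rm hd}(\sigma,\tau)$, then $\omega=(0)$ or $\pi=(0)$, and $\chi$ is a cycle with $|\chi|=|\omega\pi|$; (2) if ${\rm hd}(\sigma^{\sf CT},\tau^{\sf CT})={\rm hd}(\sigma,\tau)-1$, then (a) if $\omega=\pi$, either $\chi$ is a cycle with $|\chi|=|\omega|-1$, or $\chi$ is a product of two disjoint cycles $\omega',\pi'$ with $|\omega'|+|\pi'|=|\omega|-1$; (b) if $\omega\neq\pi$, $\chi$ is a cycle with $|\chi|=|\omega|+|\pi|-1$; (3) if ${\rm hd}(\sigma^{\sf CT},\tau^{\sf CT})={\rm hd}(\sigma,\tau)-2$, then $\omega=\pi$ and $\chi$ is a cycle with $|\chi|=|\omega|-2$; (4) if ${\rm hd}(\sigma^{\sf CT},\tau^{\sf CT})={\rm hd}(\sigma,\tau)-3$,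 then $\omega=\pi$, $|\omega|=3$ and $\chi=(0)$.
   Context: $S_n$ is the symmetric group on $\{0,1,\ldots,n-1\}$, with composition from left to right: $\tau\sigma(x):=\sigma(\tau(x))$, so $\sigma^{-1}\tau(x)=\tau(\sigma^{-1}(x))$. ${\rm hd}(\sigma,\tau)=|\{x:\sigma(x)\neq\tau(x)\}|$. The contraction of $\sigma\in S_n$ is $\sigma^{\sf CT}\in S_{n-1}$ (on $\{0,\ldots,n-2\}$) defined by $\sigma^{\sf CT}(x)=\sigma(n-1)$ if $x=\sigma^{-1}(n-1)$ and $\sigma^{\sf CT}(x)=\sigma(x)$ otherwise (i.e. delete $n-1$ from the cycle notation of $\sigma$). $|\rho|$ denotes the length of a cycle $\rho$; the identity permutation, written $(0)$, is regarded as a cycle of length $0$, and a symbol fixed by a permutation is said to belong to a cycle of length zero in its decomposition. When one of $\omega,\pi$ is $(0)$, $\omega\pi$ is a cycle and $|\omega\pi|$ is its length. *)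

(* Permutations of {0,...,n-1} are {perm 'I_n}.
   MathComp's product of permutations composes left to right:
   (s * t) x = t (s x)  (lemma permM), matching the paper's convention. *)
From mathcomp Require Import all_boot all_fingroup.
Set Implicit Arguments. Unset Strict Implicit. Unset Printing Implicit Defensive.
Import GroupScope.

Definition psupp (T : finType) (g : {perm T}) : {set T} := [set x | g x != x].

Definition hd (T : finType) (s t : {perm T}) : nat := #|[set x | s x != t x]|.

(* A permutation is a cycle (the identity (0) counting as the cycle of length 0)
   iff all symbols it moves lie in a single orbit. *)
Definition is_cycle (T : finType) (g : {perm T}) : bool :=
  [exists x, psupp g \subset porbit g x].

Definition cyc_len (T : finType) (g : {perm T}) : nat := #|psupp g|.

(* the cycle of the disjoint cycle decomposition of g containing x
   (the identity if x is fixed by g) *)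
Definition cycle_of_fun (T : finType) (g : {perm T}) (x : T) (y : T) : T :=
  if y \in porbit g x then g y else y.

Lemma porbit_step (T : finType) (g : {perm T}) x y :
  (g y \in porbit g x) = (y \in porbit g x).
Proof.
have E : porbit g (g y) = porbit g y by rewrite -(porbit_perm g 1 y) expg1.
by rewrite porbit_sym E porbit_sym.
Qed.

Lemma cycle_of_inj (T : finType) (g : {perm T}) (x : T) :
  injective (cycle_of_fun g x).
Proof.
move=> y z; rewrite /cycle_of_fun.
case: ifP => Hy; case: ifP => Hz.
- exact: perm_inj.
- by move=> E; move: Hz; rewrite -E porbit_step Hy.
- by move=> E; move: Hy; rewrite E porbit_step Hz.
- done.
Qed.

Definition cycle_of (T : finType) (g : {perm T}) (x : T) : {perm T} :=
  perm (@cycle_of_inj T g x).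

(* Contraction s^CT in S_{n-1} of s in S_n (here n = m.+1, and n-1 = ord_max):
   s^CT x = s(n-1) if s x = n-1, and s x otherwise.  We compute it as the
   restriction to 'I_m of s * (n-1, s(n-1)) (apply s, then the transposition),
   which fixes n-1. *)
Definition ct_fun (m : nat) (s : {perm 'I_m.+1}) (x : 'I_m) : 'I_m :=
  odflt x (unlift ord_max ((s * tperm ord_max (s ord_max)) (lift ord_max x))).

Lemma ct_fun_inj (m : nat) (s : {perm 'I_m.+1}) : injective (ct_fun s).
Proof.
set t := s * tperm ord_max (s ord_max).
have Ht : t ord_max = ord_max by rewrite permM tpermR.
have Hne z : ord_max != t (lift ord_max z).
  by rewrite -{1}Ht (inj_eq perm_inj) neq_lift.
move=> y z; rewrite /ct_fun -/t.
case: (unlift_some (Hne y)) => ky Ey ->.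
case: (unlift_some (Hne z)) => kz Ez -> /= Ek.
by apply: (@lift_inj _ ord_max); apply: (@perm_inj _ t); rewrite Ey Ez Ek.
Qed.

Definition ct (m : nat) (s : {perm 'I_m.+1}) : {perm 'I_m} := perm (@ct_fun_inj m s).

Definition liftp (m : nat) (c : {perm 'I_m}) : {perm 'I_m.+1} :=
  lift_perm ord_max ord_max c.

(* Lifted back to S_n, the contraction of s is s (n-1 s(n-1)); so, with a := sigma(n-1)
   and b := tau(n-1) = sigma^-1 tau (a), the lift of (sigma^CT)^-1 tau^CT is
   (n-1 a) sigma^-1 tau (n-1 b).  As rho fixes n-1, a and b, it commutes with both
   transpositions, and chi lifts to (n-1 a) X (n-1 b) with X = omega or omega pi.  Writing a
   cycle (x c_1 ... c_k) as (x c_1) ... (x c_k), and noting that conjugation by (x y)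
   renames x into y in each factor, gives two identities: if a lies on
   omega = (n-1 p q), p ending with a, then chi = (p)(q) cuts omega in two; otherwise
   omega = (n-1 p), pi = (a q) and chi = (a p q) merges them.  As
   hd(sigma, tau) = |rho| + |X| and hd(sigma^CT, tau^CT) = |rho| + |chi|, items (1)-(4)
   follow by comparing cycle sizes, a cycle through k symbols moving k of them when
   k > 1 and none otherwise. *)

From mathcomp Require Import all_boot all_fingroup zify.
Import GroupScope.
Set Implicit Arguments. Unset Strict Implicit. Unset Printing Implicit Defensive.

Definition cycle_size (k : nat) : nat := if 1 < k then k else 0.

Section CycleSizeArithmetic.
Variables x y : nat.
Local Open Scope nat_scope.

Lemma cycle_size_cut0 : cycle_size x + cycle_size y = cycle_size (x + y).+1 -> x = 0 /\ y = 0.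
Proof. by rewrite /cycle_size; case: ifP; case: ifP; case: ifP; lia. Qed.

Lemma cycle_size_cut2 :
  cycle_size x + cycle_size y + 2 = cycle_size (x + y).+1 -> x <= 1 \/ y <= 1.
Proof. by rewrite /cycle_size; case: ifP; case: ifP; case: ifP; lia. Qed.

Lemma cycle_size_cut3 :
  cycle_size x + cycle_size y + 3 = cycle_size (x + y).+1 -> x = 1 /\ y = 1.
Proof. by rewrite /cycle_size; case: ifP; case: ifP; case: ifP; lia. Qed.

Lemma cycle_size_merge0 :
  cycle_size (x + y).+1 = cycle_size x.+1 + cycle_size y.+1 -> x = 0 \/ y = 0.
Proof. by rewrite /cycle_size; case: ifP; case: ifP; case: ifP; lia. Qed.

Lemma cycle_size_merge_le : cycle_size x.+1 + cycle_size y.+1 <= cycle_size (x + y).+1 + 1.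
Proof. by rewrite /cycle_size; case: ifP; case: ifP; case: ifP; lia. Qed.

End CycleSizeArithmetic.

Section CyclicPermutation.
Variable T : finType.
Implicit Types (f g : {perm T}) (s p q : seq T) (x y z : T).

Lemma next_undup_inj s : injective (next (undup s)).
Proof. exact: can_inj (prev_next (undup_uniq s)). Qed.

(* The cycle (s_0 ... s_k); [undup] only makes the map injective for every [s]. *)
Definition cperm s : {perm T} := perm (@next_undup_inj s).

Lemma cpermE s : uniq s -> cperm s =1 next s.
Proof. by move=> Us x; rewrite permE undup_id. Qed.

Lemma next_notin s x : x \notin s -> next s x = x.
Proof. by rewrite next_nth => /negbTE ->. Qed.

Lemma next_head x s : next (x :: s) x = head x s.
Proof. by case: s => [|y s] /=; rewrite eqxx. Qed.

Lemma next_last_cat x p q :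
  uniq (x :: p ++ q) -> next (x :: p ++ q) (last x p) = head x q.
Proof.
move=> U; have E : rot (size p) (x :: p ++ q) = last x p :: q ++ belast x p.
  by rewrite -cat_cons lastI cat_rcons -(size_belast x p) rot_size_cat.
rewrite -(next_rot (size p) U) E next_head.
by case: q {U E} => //; case: p.
Qed.

Lemma cperm_nil : cperm [::] = 1.
Proof. by apply/permP => x; rewrite perm1 cpermE. Qed.

Lemma cperm1 x : cperm [:: x] = 1.
Proof. by apply/permP => y; rewrite perm1 cpermE //=; case: eqP => [->|]. Qed.

Lemma cperm_small s : size s <= 1 -> cperm s = 1.
Proof. by case: s => [|x [|]] // _; rewrite ?cperm_nil ?cperm1. Qed.

Lemma cperm_rot k s : uniq s -> cperm (rot k s) = cperm s.
Proof. by move=> U; apply/permP => x; rewrite !cpermE ?rot_uniq ?next_rot. Qed.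

Lemma cperm_catC p q : uniq (p ++ q) -> cperm (p ++ q) = cperm (q ++ p).
Proof. by move=> U; rewrite -(cperm_rot (size p) U) rot_size_cat. Qed.

Lemma cperm_cons2 x y s :
  uniq [:: x, y & s] -> cperm [:: x, y & s] = tperm x y * cperm (x :: s).
Proof.
move=> U; have [/norP[xy xs] /andP[ys Us]] := andP U.
have Uxs : uniq (x :: s) by rewrite /= xs.
apply/permP => z; rewrite permM !cpermE //.
case: tpermP => [->|->|xz yz].
- by rewrite next_head next_notin // inE negb_or eq_sym xy.
- rewrite next_head /= eq_sym (negbTE xy).
  by case: (s) => [|w s'] /=; rewrite eqxx.
- by case: (s) => [|w s'] /=; do 2!case: eqP => //.
Qed.

Lemma cperm_prod x s : uniq (x :: s) -> cperm (x :: s) = \prod_(y <- s) tperm x y.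
Proof.
elim: s => [|y s IHs] U; first by rewrite cperm1 big_nil.
rewrite cperm_cons2 // big_cons IHs //.
by move: U; rewrite /= inE negb_or => /andP[/andP[_ ->] /andP[_ ->]].
Qed.

Lemma prod_tpermJ x y s : x \notin s -> y \notin s ->
  (\prod_(z <- s) tperm x z) ^ tperm x y = \prod_(z <- s) tperm y z.
Proof.
move=> xs ys; rewrite conjg_prod big_seq [RHS]big_seq; apply: eq_bigr => z zs.
by rewrite tpermJ tpermL tpermD //; [apply: contraNneq xs | apply: contraNneq ys] => ->.
Qed.

Lemma cperm_splitr x y p q : uniq (x :: p ++ y :: q) ->
  cperm (x :: p ++ y :: q) * tperm x y = cperm (x :: p) * cperm (y :: q).
Proof.
move=> U; have := U; rewrite -cat_cons cat_uniq => /and3P[Uxp /hasPn D Uyq].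
have xq : x \notin q by apply/negP => xq; have := D x; rewrite !inE xq eqxx orbT => /(_ isT).
have yq : y \notin q by case/andP: Uyq.
rewrite !cperm_prod // big_cat big_cons /= -!mulgA; congr (_ * _).
by rewrite -{1}(tpermV x y) -conjgE prod_tpermJ.
Qed.

Lemma cperm_splitl x y p q : uniq (x :: p ++ y :: q) ->
  tperm x y * cperm (x :: p ++ y :: q) = cperm (y :: p) * cperm (x :: q).
Proof.
move=> U; have := U; rewrite -cat_cons cat_uniq => /and3P[Uxp /hasPn D Uyq].
have xp : x \notin p by case/andP: Uxp.
have yp : y \notin p by apply/negP => yp; have := D y; rewrite !inE yp eqxx orbT => /(_ isT).
have Uyp : uniq (y :: p) by rewrite /= yp; case/andP: Uxp.
have xq : x \notin q by apply/negP => xq; have := D x; rewrite !inE xq eqxx orbT => /(_ isT).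
have Uxq : uniq (x :: q) by rewrite /= xq; case/andP: Uyq.
rewrite !cperm_prod // big_cat big_cons /= !mulgA; congr (_ * _).
by rewrite -{1}(tpermV x y) -mulgA -conjgE prod_tpermJ.
Qed.

Lemma cperm_splitr_head x p q : uniq (x :: p ++ q) ->
  cperm (x :: p ++ q) * tperm x (head x q) = cperm (x :: p) * cperm q.
Proof.
case: q => [|y q] U; last exact: cperm_splitr.
by rewrite cats0 tperm1 cperm_nil !mulg1.
Qed.

Lemma cperm_splitl_last x p : uniq (x :: p) -> tperm x (last x p) * cperm (x :: p) = cperm p.
Proof.
case/lastP: p => [|p y] U; first by rewrite tperm1 cperm1 cperm_nil mulg1.
move: U; rewrite last_rcons -cats1 => U.
rewrite cperm_splitl // cperm1 mulg1 -cat1s cperm_catC //.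
by move: U => /andP[_]; rewrite uniq_catC.
Qed.

Lemma cperm_cut x p q : uniq (x :: p ++ q) ->
  tperm x (last x p) * cperm (x :: p ++ q) * tperm x (head x q) = cperm p * cperm q.
Proof.
move=> U; rewrite -mulgA cperm_splitr_head // mulgA cperm_splitl_last //.
by move: U; rewrite -cat_cons cat_uniq => /andP[].
Qed.

Lemma cperm_merge x y p q : uniq (x :: p ++ y :: q) ->
  tperm x y * (cperm (x :: p) * cperm (y :: q)) * tperm x (head y q) = cperm (y :: p ++ q).
Proof.
move=> U; have Uyx : uniq (y :: p ++ x :: q).
  by rewrite -(perm_uniq (_ : perm_eq (x :: p ++ y :: q) _)) //;
    apply/seq.permP => P; rewrite /= !count_cat /=; lia.
rewrite -cperm_splitl // mulgA -(tpermC y x) tperm2 mul1g.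
rewrite -cat_cons cperm_catC //.
have Uxq : uniq ((x :: q) ++ y :: p) by rewrite uniq_catC.
have -> : head y q = head x (q ++ y :: p) by case: q {U Uyx Uxq}.
rewrite (cperm_splitr_head (p := [::])) // cperm1 mul1g cperm_catC //.
by move: Uxq => /andP[].
Qed.

Lemma psupp_cperm_sub s : psupp (cperm s) \subset [set x in s].
Proof.
by apply/subsetP => x; rewrite !inE; apply: contraR => xs; rewrite permE next_notin ?mem_undup.
Qed.

Lemma psupp_cperm s : uniq s -> 1 < size s -> psupp (cperm s) = [set x in s].
Proof.
move=> U s2; apply/eqP; rewrite eqEsubset psupp_cperm_sub; apply/subsetP => x.
rewrite !inE => /rot_to[i [|y r] Er]; first by move: s2; rewrite -(size_rot i) Er.
have : uniq (rot i s) by rewrite rot_uniq.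
rewrite cpermE // -(next_rot i U) Er next_head /= inE negb_or eq_sym.
by case/andP => /andP[].
Qed.

Lemma cyc_len1 : cyc_len (1 : {perm T}) = 0.
Proof. by apply/eqP; rewrite cards_eq0; apply/eqP/setP => x; rewrite !inE perm1 eqxx. Qed.

Lemma cyc_len_cperm s : uniq s -> cyc_len (cperm s) = cycle_size (size s).
Proof.
move=> U; rewrite /cycle_size; case: ifP => [s2 | /negbT].
  by rewrite /cyc_len psupp_cperm // cardsE (card_uniqP U).
by rewrite -ltnNge => /cperm_small ->; rewrite cyc_len1.
Qed.

Lemma disjoint_cperm p q : [disjoint p & q] -> [disjoint psupp (cperm p) & psupp (cperm q)].
Proof.
move=> D; apply: disjointWl (psupp_cperm_sub p) _; apply: disjointWr (psupp_cperm_sub q) _.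
have [Ep Eq] : [set x in p] =i p /\ [set x in q] =i q by split=> x; rewrite inE.
by rewrite (eq_disjoint Ep) (eq_disjoint_r Eq).
Qed.

Lemma is_cycle1 (x0 : T) : is_cycle (1 : {perm T}).
Proof. by apply/existsP; exists x0; apply/subsetP => x; rewrite inE perm1 eqxx. Qed.

Lemma fconnect_porbit g x y : fconnect g x y -> y \in porbit g x.
Proof. by case/connectP => _ /fpathP[n ->] ->; rewrite last_traject -permX mem_porbit. Qed.

Lemma is_cycle_cperm x0 s : uniq s -> is_cycle (cperm s).
Proof.
move=> U; apply/existsP; exists (head x0 s); apply/subsetP => y.
move/(subsetP (psupp_cperm_sub s)); rewrite inE; case: s U => // x s U ys.
have cyc : fcycle (cperm (x :: s)) (x :: s).
  by rewrite (@eq_cycle _ _ (frel (next (x :: s)))) ?cycle_next // => z w /=; rewrite cpermE.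
by apply: fconnect_porbit; rewrite (fconnect_cycle cyc (mem_head x s)).
Qed.

End CyclicPermutation.

Section PermutationSupport.
Variable T : finType.
Implicit Types (f r : {perm T}).

Lemma psupp_mul_sub f f' : psupp (f * f') \subset psupp f :|: psupp f'.
Proof.
apply/subsetP => x; rewrite !inE permM; apply: contraR.
by rewrite negb_or !negbK => /andP[/eqP -> /eqP ->].
Qed.

Lemma psuppM f f' : [disjoint psupp f & psupp f'] -> psupp (f * f') = psupp f :|: psupp f'.
Proof.
move=> D; apply/eqP; rewrite eqEsubset psupp_mul_sub; apply/subsetP => x.
rewrite !inE permM; case: (eqVneq (f x) x) => [-> //|fx _].
have : f x \in psupp f by rewrite !inE (inj_eq perm_inj).
by move/(disjointFr D); rewrite inE => /negbFE/eqP ->.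
Qed.

Lemma card_psuppM f f' : [disjoint psupp f & psupp f'] ->
  #|psupp (f * f')| = #|psupp f| + #|psupp f'|.
Proof. by move=> D; rewrite psuppM // cardsU (disjoint_setI0 D) cards0 subn0. Qed.

Lemma disjoint_psuppM r f f' : [disjoint psupp r & psupp f] ->
  [disjoint psupp r & psupp f'] -> [disjoint psupp r & psupp (f * f')].
Proof.
move=> D D'; apply: disjointWr (psupp_mul_sub f f') _.
rewrite disjoint_sym disjoints_subset subUset -!disjoints_subset.
by rewrite !(disjoint_sym _ (psupp r)) D D'.
Qed.

Lemma psupp_self_disjoint f : [disjoint psupp f & psupp f] -> f = 1.
Proof.
move=> D; apply/permP => x; rewrite perm1; apply/eqP.
case: (boolP (x \in psupp f)) => [xf | ]; last by rewrite inE negbK.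
by have := disjointFr D xf; rewrite xf.
Qed.

Lemma hd_psupp f f' : hd f f' = #|psupp (f^-1 * f')|.
Proof.
have -> : psupp (f^-1 * f') = f @: [set x | f x != f' x].
  apply/setP => y; rewrite inE permM -{1 3}(permKV f y) mem_imset ?inE ?permKV 1?eq_sym //.
  exact: perm_inj.
by rewrite card_imset //; exact: perm_inj.
Qed.

End PermutationSupport.

Section CycleDecomposition.
Variable T : finType.
Implicit Types (f g r : {perm T}) (s p q : seq T) (x y : T).

Lemma porbit_cycle g x :
  exists s, [/\ uniq (x :: s), fcycle g (x :: s) & porbit g x =i x :: s].
Proof.
have := iter_porbit g x; have := uniq_traject_porbit g x; have := porbit_traject g x.
case: #|_| (card_porbit_neq0 g x) => // n _; rewrite trajectS => E U It.
exists (traject g (g x) n); split=> //.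
by rewrite /= -[x in rcons _ x]It iterSr -trajectSr fpath_traject.
Qed.

Lemma cycle_ofE g x s : uniq s -> fcycle g s -> porbit g x =i s -> cycle_of g x = cperm s.
Proof.
move=> U C E; apply/permP => y; rewrite cpermE // permE /cycle_of_fun E.
by case: ifP => ys; [rewrite (nextE C) | rewrite next_notin ?ys].
Qed.

Lemma cycle_of_porbit g x y : y \in porbit g x -> cycle_of g y = cycle_of g x.
Proof.
by rewrite -eq_porbit_mem => /eqP E; apply/permP => z; rewrite !permE /cycle_of_fun E.
Qed.

Lemma cycle_of_cut g x a : a \in porbit g x -> exists p q,
  [/\ uniq (x :: p ++ q), cycle_of g x = cperm (x :: p ++ q), a = last x p & g a = head x q].
Proof.
move=> ax; have [s [U C E]] := porbit_cycle g x.
rewrite E in ax; move: U C E; case/splitPl: ax => p q La U C E.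
exists p, q; split; rewrite ?(cycle_ofE U C E) //.
have aS : a \in x :: p ++ q by rewrite -La -cat_cons mem_cat mem_last.
by rewrite -(nextE C aS) -La next_last_cat.
Qed.

Lemma cycle_of_split g x a : a \notin porbit g x -> exists p q,
  [/\ uniq (x :: p ++ a :: q), cycle_of g x = cperm (x :: p),
       cycle_of g a = cperm (a :: q) & g a = head a q].
Proof.
move=> aNx; have [p [Up Cp Ep]] := porbit_cycle g x.
have [q [Uq Cq Eq]] := porbit_cycle g a.
exists p, q; split; rewrite ?(cycle_ofE _ _ Ep) ?(cycle_ofE _ _ Eq) //.
  rewrite -cat_cons cat_uniq Up Uq andbT; apply/hasPn => z; rewrite -Eq -Ep => za.
  apply: contra aNx => zx; rewrite -porbit_sym in za.
  by rewrite -(eqP (_ : porbit g z == porbit g x)) ?eq_porbit_mem.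
by rewrite -(nextE Cq) ?mem_head ?next_head.
Qed.

Lemma disjoint_cycle_of_fix g r X x y : g = r * X -> [disjoint psupp r & psupp X] ->
  [disjoint psupp r & psupp (cycle_of g x)] -> y \in porbit g x -> r y = y.
Proof.
move=> gE DX Dc yx; apply/eqP/negPn/negP => ry.
have Xry : X (r y) = r y.
  have : r y \in psupp r by rewrite !inE (inj_eq perm_inj).
  by move/(disjointFr DX); rewrite inE => /negbFE/eqP.
have : y \in psupp (cycle_of g x) by rewrite !inE permE /cycle_of_fun yx gE permM Xry.
by rewrite (disjointFr Dc) // inE.
Qed.

End CycleDecomposition.

(* Items (1)-(4) of the proposition, [h] and [h'] standing for hd(sigma, tau) and
   hd(sigma^CT, tau^CT). *)
Definition contraction_shape (T T' : finType) (omega pi : {perm T}) (chi : {perm T'})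
    (h h' : nat) : Prop :=
  [/\ h' = h ->
        (omega = 1 \/ pi = 1) /\ (is_cycle chi /\ cyc_len chi = cyc_len (omega * pi)),
      h' + 1 = h ->
        (omega = pi ->
           (is_cycle chi /\ cyc_len chi + 1 = cyc_len omega) \/
           (exists omega' pi' : {perm T'},
               [/\ is_cycle omega', is_cycle pi', [disjoint psupp omega' & psupp pi'],
                   chi = omega' * pi' & cyc_len omega' + cyc_len pi' + 1 = cyc_len omega])) /\
        (omega != pi -> is_cycle chi /\ cyc_len chi + 1 = cyc_len omega + cyc_len pi),
      h' + 2 = h -> omega = pi /\ is_cycle chi /\ cyc_len chi + 2 = cyc_len omega &
      h' + 3 = h -> [/\ omega = pi, cyc_len omega = 3 & chi = 1]].

Lemma contraction_shape_shift (T T' : finType) (omega pi : {perm T}) (chi : {perm T'})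
    r h0 h0' h h' : h = r + h0 -> h' = r + h0' ->
  contraction_shape omega pi chi h0 h0' -> contraction_shape omega pi chi h h'.
Proof.
move=> -> -> [I1 I2 I3 I4]; split=> /eqP; rewrite -?addnA eqn_add2l => /eqP;
  [exact: I1 | exact: I2 | exact: I3 | exact: I4].
Qed.

Section Contraction.
Variable m : nat.
Local Notation N := (@ord_max m).
Implicit Types (f g : {perm 'I_m.+1}) (c : {perm 'I_m}).

Lemma liftp_ct f : liftp (ct f) = f * tperm N (f N).
Proof.
apply/permP => x; rewrite /liftp; case: (unliftP N x) => [y|] ->; last first.
  by rewrite lift_perm_id permM tpermR.
rewrite lift_perm_lift /ct permE /ct_fun.
set t := f * tperm N (f N).
have Hne : N != t (lift N y).
  by rewrite -{1}(_ : t N = N) ?(inj_eq perm_inj) ?neq_lift // permM tpermR.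
by case: (unlift_some Hne) => k -> ->.
Qed.

Lemma liftpM c d : liftp (c * d) = liftp c * liftp d.
Proof. exact/esym/lift_permM. Qed.

Lemma liftpV c : liftp c^-1 = (liftp c)^-1.
Proof. exact/esym/lift_permV. Qed.

Lemma liftp_contraction (sigma tau : {perm 'I_m.+1}) :
  liftp ((ct sigma)^-1 * ct tau) = tperm N (sigma N) * (sigma^-1 * tau) * tperm N (tau N).
Proof. by rewrite liftpM liftpV !liftp_ct invMg tpermV !mulgA. Qed.

Lemma psupp_liftp c : psupp (liftp c) = lift N @: psupp c.
Proof.
apply/setP => y; rewrite inE /liftp; case: (unliftP N y) => [x|] ->.
  by rewrite lift_perm_lift (inj_eq (@lift_inj _ N)) mem_imset ?inE //; exact: lift_inj.
rewrite lift_perm_id eqxx; apply/esym/imsetP => -[x _ /eqP].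
by rewrite (negbTE (neq_lift _ _)).
Qed.

Lemma cyc_len_liftp c : cyc_len (liftp c) = cyc_len c.
Proof. by rewrite /cyc_len psupp_liftp card_imset //; exact: lift_inj. Qed.

Lemma liftp_cperm (s : seq 'I_m) : uniq s -> liftp (cperm s) = cperm (map (lift N) s).
Proof.
move=> U; have Us : uniq (map (lift N) s) by rewrite map_inj_uniq //; exact: lift_inj.
apply/permP => x; rewrite cpermE //; case: (unliftP N x) => [y|] ->.
  by rewrite /liftp lift_perm_lift cpermE // next_map //; exact: lift_inj.
rewrite /liftp lift_perm_id next_notin //; apply/mapP => -[y _ /eqP].
by rewrite (negbTE (neq_lift _ _)).
Qed.

Lemma unlift_seq (s : seq 'I_m.+1) : N \notin s -> exists s', s = map (lift N) s'.
Proof.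
elim: s => [|x s IHs]; first by exists [::].
rewrite inE negb_or => /andP[Nx /IHs[s' ->]].
by case: (unliftP N x) Nx => [y -> _|->]; [exists (y :: s') | rewrite eqxx].
Qed.

Lemma contraction_factor (sigma tau rho X : {perm 'I_m.+1}) :
  sigma^-1 * tau = rho * X -> [disjoint psupp rho & psupp X] ->
  rho N = N -> rho (sigma N) = sigma N -> rho (tau N) = tau N ->
  let chi := tperm N (sigma N) * X * tperm N (tau N) in
  [/\ liftp ((ct sigma)^-1 * ct tau) = rho * chi, [disjoint psupp rho & psupp chi],
      hd sigma tau = #|psupp rho| + #|psupp X| &
      hd (ct sigma) (ct tau) = #|psupp rho| + #|psupp chi|].
Proof.
move=> gE DX rN ra rb chi.
have Lchi : liftp ((ct sigma)^-1 * ct tau) = rho * chi.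
  by rewrite liftp_contraction gE mulgA (conjgC (tperm _ _)) tpermJ rN ra !mulgA.
have Dchi : [disjoint psupp rho & psupp chi].
  rewrite disjoint_subset; apply/subsetP => z zr; rewrite !inE negbK.
  have fixr w : rho w = w -> w != z.
    by move=> rw; apply: contraTneq zr => <-; rewrite inE rw eqxx.
  have Xz : X z = z by apply/eqP; move/(disjointFr DX): zr; rewrite inE => /negbFE.
  by rewrite !permM [tperm _ _ z]tpermD ?fixr // Xz tpermD ?fixr.
split=> //; first by rewrite hd_psupp gE card_psuppM.
by rewrite hd_psupp -[LHS]/(cyc_len _) -cyc_len_liftp /cyc_len Lchi card_psuppM.
Qed.

Lemma contraction_cut g a : 0 < m -> a \in porbit g N ->
  let omega := cycle_of g N in
  exists chi, liftp chi = tperm N a * omega * tperm N (g a) /\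
              contraction_shape omega omega chi (cyc_len omega) (cyc_len chi).
Proof.
move=> m_gt0 /cycle_of_cut[p [q [U -> -> ->]]] /=; have x0 : 'I_m := Ordinal m_gt0.
move: (U); rewrite /= mem_cat negb_or => /andP[/andP[Np Nq] Upq].
have [A EA] := unlift_seq Np; have [B EB] := unlift_seq Nq; subst p q.
rewrite -map_cat map_inj_uniq in Upq; last exact: lift_inj.
move: (Upq); rewrite cat_uniq => /and3P[UA DAB UB].
rewrite -disjoint_has disjoint_sym in DAB; move/disjoint_cperm in DAB.
exists (cperm A * cperm B); split; first by rewrite liftpM !liftp_cperm ?cperm_cut.
have lenO : cyc_len (cperm (N :: map (lift N) A ++ map (lift N) B)) =
            cycle_size (size A + size B).+1.
  by rewrite cyc_len_cperm //= size_cat !size_map.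
have lenX : cyc_len (cperm A * cperm B) = cycle_size (size A) + cycle_size (size B).
  by rewrite /cyc_len card_psuppM // -!/(cyc_len _) !cyc_len_cperm.
split.
- move=> H; have [/size0nil A0 /size0nil B0] : size A = 0 /\ size B = 0.
    by apply: cycle_size_cut0; rewrite -lenO -lenX.
  rewrite A0 B0 /= cperm1 cperm_nil !mulg1.
  by rewrite !cyc_len1; split; [left | split; [apply: is_cycle1 x0|]].
- move=> H; split=> [_ | /eqP //]; right; exists (cperm A), (cperm B).
  by split; rewrite ?(is_cycle_cperm x0) // -H /cyc_len card_psuppM.
- move=> H; split=> //; split=> //; move: H; rewrite lenO lenX.
  by case/cycle_size_cut2 => /cperm_small ->; rewrite ?mul1g ?mulg1 (is_cycle_cperm x0).
- rewrite lenO lenX => /cycle_size_cut3[A1 B1].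
  by rewrite A1 B1 (cperm_small (s := A)) ?A1 // (cperm_small (s := B)) ?B1 // mulg1.
Qed.

Lemma contraction_merge g a : 0 < m -> a \notin porbit g N ->
  let omega := cycle_of g N in let pi := cycle_of g a in
  exists chi, liftp chi = tperm N a * (omega * pi) * tperm N (g a) /\
    [disjoint psupp omega & psupp pi] /\
    contraction_shape omega pi chi (cyc_len (omega * pi)) (cyc_len chi).
Proof.
move=> m_gt0 /cycle_of_split[p [q [U -> -> ->]]] /=; have x0 : 'I_m := Ordinal m_gt0.
move: (U); rewrite -cat_cons cat_uniq => /and3P[UNp DOP Uaq].
rewrite -disjoint_has disjoint_sym in DOP; move/disjoint_cperm in DOP.
have Us : uniq (a :: p ++ q) by move: U; rewrite cons_uniq -(cat1s a q) uniq_catCA => /andP[].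
have Ns : N \notin a :: p ++ q.
  move: U; rewrite cons_uniq => /andP[+ _]; apply: contra; rewrite !(inE, mem_cat).
  by case/or3P => ->; rewrite ?orbT.
have [S ES] := unlift_seq Ns.
have US : uniq S by rewrite -(map_inj_uniq (@lift_inj _ N)) -ES.
exists (cperm S); split; first by rewrite liftp_cperm // -ES cperm_merge.
split=> //.
have lenOP : cyc_len (cperm (N :: p) * cperm (a :: q)) =
             cycle_size (size p).+1 + cycle_size (size q).+1.
  by rewrite /cyc_len card_psuppM // -!/(cyc_len _) !cyc_len_cperm.
have lenX : cyc_len (cperm S) = cycle_size (size p + size q).+1.
  by rewrite cyc_len_cperm // -(size_map (lift N)) -ES /= size_cat.
have cycX := is_cycle_cperm x0 US.
have no_large_drop k : 1 < k ->
    cyc_len (cperm S) + k = cyc_len (cperm (N :: p) * cperm (a :: q)) -> False.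
  move=> k_gt1 H; have := cycle_size_merge_le (size p) (size q).
  by rewrite -lenOP -lenX -H leq_add2l leqNgt k_gt1.
split.
- move=> H; split; last by [].
  have [/size0nil -> | /size0nil ->] : size p = 0 \/ size q = 0.
    by apply: cycle_size_merge0; rewrite -lenOP -lenX.
  + by left; rewrite cperm1.
  + by right; rewrite cperm1.
- move=> H; split=> [E | _]; last by rewrite H /cyc_len card_psuppM.
  have := disjoint_setI0 DOP; rewrite -E setIid => O.
  by move: H; rewrite /cyc_len card_psuppM // -E O cards0 addn1.
- by move/(no_large_drop 2 isT).
- by move/(no_large_drop 3 isT).
Qed.

Lemma contraction_cycles g a : 0 < m ->
  let omega := cycle_of g N in let pi := cycle_of g a in
  let X := if omega == pi then omega else omega * pi in
  exists chi, liftp chi = tperm N a * X * tperm N (g a) /\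
              contraction_shape omega pi chi (cyc_len X) (cyc_len chi).
Proof.
move=> m_gt0 omega pi X; case: (boolP (a \in porbit g N)) => aN.
  by rewrite /X /pi (cycle_of_porbit aN) eqxx; apply: contraction_cut.
have [chi [Lchi [D Sh]]] := contraction_merge m_gt0 aN.
exists chi; suff -> : X = omega * pi by [].
rewrite /X; case: eqP => // E.
have D' : [disjoint psupp omega & psupp omega] by rewrite {2}E.
by rewrite -E (psupp_self_disjoint D') mulg1.
Qed.

End Contraction.

Theorem proposition4p4 (m : nat) (Hn : 2 <= m.+1)
  (sigma tau : {perm 'I_m.+1}) (Hct : ct sigma != ct tau)
  (rho : {perm 'I_m.+1}) :
  let g := sigma^-1 * tau in
  let omega := cycle_of g ord_max in
  let pi := cycle_of g (sigma ord_max) in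
  [disjoint psupp rho & psupp omega] ->
  [disjoint psupp rho & psupp pi] ->
  g = (if omega == pi then rho * omega else rho * omega * pi) ->
  exists chi : {perm 'I_m},
    [/\ [disjoint psupp rho & psupp (liftp chi)] /\
          liftp ((ct sigma)^-1 * ct tau) = rho * liftp chi,
        (* (1) *)
        hd (ct sigma) (ct tau) = hd sigma tau ->
          (omega = 1 \/ pi = 1) /\
          (is_cycle chi /\ cyc_len chi = cyc_len (omega * pi)),
        (* (2) *)
        hd (ct sigma) (ct tau) + 1 = hd sigma tau ->
          (omega = pi ->
             (is_cycle chi /\ cyc_len chi + 1 = cyc_len omega) \/
             (exists omega' pi' : {perm 'I_m},
                 [/\ is_cycle omega', is_cycle pi',
                     [disjoint psupp omega' & psupp pi'],
                     chi = omega' * pi' &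
                     cyc_len omega' + cyc_len pi' + 1 = cyc_len omega])) /\
          (omega != pi ->
             is_cycle chi /\ cyc_len chi + 1 = cyc_len omega + cyc_len pi),
        (* (3) *)
        hd (ct sigma) (ct tau) + 2 = hd sigma tau ->
          omega = pi /\ is_cycle chi /\ cyc_len chi + 2 = cyc_len omega &
        (* (4) *)
        hd (ct sigma) (ct tau) + 3 = hd sigma tau ->
          [/\ omega = pi, cyc_len omega = 3 & chi = 1]].
Proof.
move=> g omega pi Dro Drp Hg.
have [chi [Lchi Sh]] := contraction_cycles g (sigma ord_max) Hn.
set X := if omega == pi then omega else omega * pi in Lchi Sh.
have gX : g = rho * X by rewrite Hg /X; case: ifP; rewrite ?mulgA.
have DrX : [disjoint psupp rho & psupp X].
  by rewrite /X; case: ifP => _ //; apply: disjoint_psuppM.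
have gab : g (sigma ord_max) = tau ord_max by rewrite permM permK.
have rN := disjoint_cycle_of_fix gX DrX Dro (porbit_id g ord_max).
have ra := disjoint_cycle_of_fix gX DrX Drp (porbit_id g (sigma ord_max)).
have rb : rho (tau ord_max) = tau ord_max.
  by apply: disjoint_cycle_of_fix gX DrX Drp _; rewrite -gab -{1}[g]expg1 mem_porbit.
have [Lct Dchi hd1 hd2] := contraction_factor gX DrX rN ra rb.
rewrite -gab -Lchi in Lct Dchi hd2.
rewrite -[#|psupp (liftp chi)|]/(cyc_len _) cyc_len_liftp in hd2.
have [I1 I2 I3 I4] := contraction_shape_shift hd1 hd2 Sh.
by exists chi.
Qed.
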